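(* Let $n\ge1$, $\mathfrak g=sl(n+1,\mathbb C)$, $M=\mathbb C[p_1,\dots,p_n,q_1,\dots,q_n]$ with Lie bracket $[\cdot,\cdot]_\ast$, and let $\Phi_0:\mathfrak g\to M$, $\Phi_0(X)=\tilde X$. For every $a\in\mathbb C$, the map $\Phi_a:\mathfrak g\to M[[t]]$, $\Phi_a(X)=\tilde X+ta\varphi_1(X)$, is a formal deformation of $\Phi_0$, i.e. $\Phi_a([X,Y])=[\Phi_a(X),\Phi_a(Y)]_\ast$ for all $X,Y\in\mathfrak g$ (the bracket being extended $\mathbb C[[t]]$-bilinearly to formal series).
   Context: $E_{ij}$ denotes the $(n+1)\times(n+1)$ matrix with $1$ in entry $(i,j)$ and $0$ elsewhere. Let $\Psi(p,q)$ be the $(n+1)\times(n+1)$ matrix whose first row is $(-\sum_j p_jq_j,\ q_1,\dots,q_n)$ and whose $(k+1)$-th row ($1\le k\le n$) is $p_k$ times the first row. For $X\in\mathfrak g$, $\tilde X(p,q)=\operatorname{Tr}(\Psi(p,q)X)$. Write $x=(p_1,\dots,p_n,q_1,\dots,q_n)$, let $\Lambda^{k,n+k}=1$, $\Lambda^{n+k,k}=-1$ ($1\le k\le n$), $\Lambda^{ij}=0$ otherwise, $P^l(u,v)=\sum\Lambda^{i_1j_1}\cdots\Lambda^{i_lj_l}\partial^l_{x_{i_1}\cdots x_{i_l}}u\,\partial^l_{x_{j_1}\cdots x_{j_l}}v$, and $[u,v]_\ast=\sum_{l\ge0}\frac{(-1/4)^l}{(2l+1)!}P^{2l+1}(u,v)$.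 The linear map $\varphi_1:\mathfrak g\to M$ is determined by $\varphi_1(E_{11}-E_{22})=1$, $\varphi_1(E_{kk}-E_{k+1,k+1})=0$ for $k=2,\dots,n$, $\varphi_1(E_{1,k+1})=p_k$ for $k=1,\dots,n$, and $\varphi_1(E_{ij})=0$ for $i\ge2$, $j\ne i$. *)

From mathcomp Require Import all_boot all_algebra.
From mathcomp Require Import mpoly.
From mathcomp Require Import complex.
From mathcomp Require Import reals.
Set Implicit Arguments. Unset Strict Implicit. Unset Printing Implicit Defensive.
Import GRing.Theory Num.Theory.
Local Open Scope ring_scope.

(* The complex numbers are modelled as  complex R = R[i]  for a real-number
   type  R : realType.  The polynomial algebra
   M = C[p_1,...,p_n,q_1,...,q_n] is  {mpoly R[i][n + n]}, with variable
   x_i (0-indexed): x_k = p_(k+1) for k < n and x_(n+k) = q_(k+1). *)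

Definition Mpoly (R : realType) (n : nat) := {mpoly R[i][n + n]}.

Definition pvar (R : realType) (n : nat) (k : 'I_n) : Mpoly R n :=
  'X_(lshift n k).
Definition qvar (R : realType) (n : nat) (k : 'I_n) : Mpoly R n :=
  'X_(rshift n k).

Definition Lam (R : realType) (n : nat) (a b : 'I_(n + n)) : R[i] :=
  if (a < n)%N && (b == a + n :> nat)%N then 1
  else if (b < n)%N && (a == b + n :> nat)%N then -1 else 0.

Definition dern (R : realType) (n : nat) (s : seq 'I_(n + n)) (u : Mpoly R n)
  : Mpoly R n := foldr (fun m p => mderiv m p) u s.

Definition Pl (R : realType) (n l : nat) (u v : Mpoly R n) : Mpoly R n :=
  \sum_(f : {ffun 'I_l -> 'I_(n + n) * 'I_(n + n)})
     (\prod_(s : 'I_l) Lam R (f s).1 (f s).2) *: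
       (dern [seq (f s).1 | s <- enum 'I_l] u *
        dern [seq (f s).2 | s <- enum 'I_l] v).

(* The series is
   finite: P^{2l+1}(u,v) = 0 as soon as 2l+1 exceeds the total degree of u,
   hence all terms with l >= msize u (= total degree + 1) vanish and the sum
   is taken over l < (msize u).+1. *)
Definition star_br (R : realType) (n : nat) (u v : Mpoly R n) : Mpoly R n :=
  \sum_(l < (msize u).+1)
     ((- (4%:R : R[i])^-1) ^+ l / ((2 * l + 1)`!)%:R) *: Pl (2 * l + 1) u v.

Definition Mser (R : realType) (n : nat) := nat -> Mpoly R n.

Definition star_ser (R : realType) (n : nat) (U V : Mser R n) : Mser R n :=
  fun k => \sum_(m < k.+1) star_br (U m) (V (k - m)%N).

Definition Psi (R : realType) (n : nat) : 'M[Mpoly R n]_(n.+1) :=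
  \matrix_(r < n.+1, c < n.+1)
    ((if unlift ord0 r is Some k then pvar R k else 1) *
     (if unlift ord0 c is Some k then qvar R k
      else - \sum_(k < n) pvar R k * qvar R k)).

Definition tilde (R : realType) (n : nat) (X : 'M[R[i]]_(n.+1)) : Mpoly R n :=
  \tr (Psi R n *m map_mx (fun z => z%:MP) X).

Definition mx_br (R : realType) (n : nat) (X Y : 'M[R[i]]_(n.+1)) :=
  X *m Y - Y *m X.

Definition Phi_a (R : realType) (n : nat) (phi : 'M[R[i]]_(n.+1) -> Mpoly R n)
  (a : R[i]) (X : 'M[R[i]]_(n.+1)) : Mser R n :=
  fun k => if k == 0%N then tilde X else if k == 1%N then a *: phi X else 0.

From HB Require Import structures.
From mathcomp Require Import all_boot all_algebra.
From mathcomp Require Import mpoly.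
From mathcomp Require Import complex.
From mathcomp Require Import reals.
From mathcomp Require Import ring zify.
Set Implicit Arguments. Unset Strict Implicit. Unset Printing Implicit Defensive.
Import GRing.Theory Num.Theory.
Local Open Scope ring_scope.

(* On polynomials of degree at most one in the q's, only the first term of
   [u,v]_* survives: every nonzero Lambda^{ij} pairs a p-derivative with a
   q-derivative, so P^l with l >= 3 puts two q-derivatives on one factor.
   Every coefficient of Phi_a(X) has this form, and the bracket becomes the
   Poisson bracket {.,.}.  Moreover phi1 agrees on sl(n+1) with
   varphi1 X = sum_r X_{1r} P_r, where P = (1, p_1, ..., p_n)^T.

   With Q = (-sum_k p_k q_k, q_1, ..., q_n) we have Psi = P Q, hence
   X~ = Q X P.  The derivation {X~, .} acts on P by varphi1(X) - X and on Q by
   X - varphi1(X); the scalar parts cancel in Q Y P, giving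
   {X~, Y~} = [X,Y]~, while {X~, varphi1 Y} = varphi1 X varphi1 Y - varphi1 (Y X),
   whose antisymmetrisation is the cocycle identity for varphi1.  The t^2
   coefficient vanishes since varphi1 X and varphi1 Y do not involve q. *)

Section MatrixDerivation.
Variables (K : comNzRingType) (D : {additive K -> K}).
Hypothesis derivM : forall x y, D (x * y) = D x * y + x * D y.

Lemma map_mx_derivM m n p (A : 'M[K]_(m, n)) (B : 'M[K]_(n, p)) :
  map_mx D (A *m B) = map_mx D A *m B + A *m map_mx D B.
Proof.
apply/matrixP => i j; rewrite !mxE raddf_sum -big_split /=.
by apply: eq_bigr => k _; rewrite derivM !mxE.
Qed.

Variables (m : nat) (B : 'M[K]_m).
Hypothesis DB : map_mx D B = 0.

Lemma deriv_sandwich (q : 'rV_m) (p : 'cV_m) :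
  D ((q *m B *m p) 0 0) = (map_mx D q *m B *m p + q *m B *m map_mx D p) 0 0.
Proof.
transitivity (map_mx D (q *m B *m p) 0 0); first by rewrite [RHS]mxE.
by rewrite !map_mx_derivM DB mulmx0 addr0.
Qed.

Variables (A : 'M[K]_m) (c : K).

Lemma deriv_mulmx_col (p : 'cV_m) i : map_mx D p = c *: p - A *m p ->
  D ((B *m p) i 0) = c * (B *m p) i 0 - (B *m A *m p) i 0.
Proof.
move=> Dp; transitivity (map_mx D (B *m p) i 0); first by rewrite [RHS]mxE.
by rewrite map_mx_derivM DB mul0mx add0r Dp mulmxBr -scalemxAr mulmxA !mxE.
Qed.

Lemma deriv_sandwich_commutator (q : 'rV_m) (p : 'cV_m) :
  map_mx D p = c *: p - A *m p -> map_mx D q = q *m A - c *: q ->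
  D ((q *m B *m p) 0 0) = (q *m (A *m B - B *m A) *m p) 0 0.
Proof.
move=> Dp Dq; rewrite deriv_sandwich Dq Dp mulmxBr !mulmxBl mulmxBr.
by rewrite -!scalemxAl -!scalemxAr !mulmxA addrA subrK mulmxBl.
Qed.
End MatrixDerivation.

Section TracelessBasis.
Variables (K : comNzRingType) (m : nat).
Implicit Types X : 'M[K]_m.+1.

Lemma mxtrace_delta (i j : 'I_m.+1) : \tr (delta_mx i j : 'M[K]_m.+1) = (i == j)%:R.
Proof.
rewrite /mxtrace (bigD1 i) //= big1 => [|k /negbTE hk]; first by rewrite !mxE eqxx addr0.
by rewrite mxE hk.
Qed.

Lemma mxtrace_delta_sub (i j : 'I_m.+1) :
  \tr (delta_mx i i - delta_mx j j : 'M[K]_m.+1) = 0.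
Proof. by rewrite raddfB /= !mxtrace_delta !eqxx subrr. Qed.

Definition traceless_delta (r c : 'I_m.+1) : 'M[K]_m.+1 :=
  delta_mx r c - (r == c)%:R *: delta_mx ord0 ord0.

Lemma mxtrace_traceless_delta r c : \tr (traceless_delta r c) = 0.
Proof. by rewrite raddfB /= mxtraceZ !mxtrace_delta eqxx mulr1 subrr. Qed.

Lemma traceless_delta_expansion X :
  \tr X = 0 -> X = \sum_r \sum_c X r c *: traceless_delta r c.
Proof.
move=> trX.
transitivity (\sum_r \sum_c X r c *: delta_mx r c - \tr X *: delta_mx ord0 ord0).
  by rewrite trX scale0r subr0 -matrix_sum_delta.
rewrite /mxtrace scaler_suml -sumrB; apply: eq_bigr => r _.
rewrite /traceless_delta; under [RHS]eq_bigr do rewrite scalerBr scalerA.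
rewrite sumrB -scaler_suml; congr (_ - _ *: _).
rewrite (bigD1 r) //= eqxx mulr1 big1 ?addr0 // => c /negbTE hrc.
by rewrite eq_sym hrc mulr0.
Qed.

End TracelessBasis.

Arguments traceless_delta {K m} r c.

Lemma lift0_eq0 n (k : 'I_n) : (lift ord0 k == ord0) = false.
Proof. by rewrite eq_sym; apply/negbTE/neq_lift. Qed.

Section PoissonBracket.
Variables (R : realType) (n : nat).
Local Notation M := (Mpoly R n).
Local Notation Lam := (Lam R).

Lemma Lam_anti (a b : 'I_(n + n)) : Lam b a = - Lam a b.
Proof.
rewrite /Lam; case: (ltnP a n) => ha; case: (ltnP b n) => hb /=.
- by rewrite ifN ?ifN ?oppr0 //; apply/eqP; lia.
- by case: ifP; rewrite ?oppr0.
- by case: ifP; rewrite ?opprK ?oppr0.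
- by rewrite oppr0.
Qed.

Lemma Lam_eq0 (a b : 'I_(n + n)) : (n <= a)%N = (n <= b)%N -> Lam a b = 0.
Proof.
rewrite /Lam => hab; rewrite ifN ?ifN //; apply/andP; case=> h /eqP; lia.
Qed.

Lemma Lam_pq (k j : 'I_n) : Lam (lshift n k) (rshift n j) = (k == j)%:R.
Proof.
rewrite /Lam /= ltn_ord /= addnC eqn_add2r eq_sym val_eqE.
by case: (k == j); rewrite //= ltnNge leq_addl.
Qed.

Definition poisson (u v : M) : M :=
  \sum_(a < n + n) \sum_(b < n + n) Lam a b *: (mderiv a u * mderiv b v).

Lemma poisson_is_linear u : linear (poisson u).
Proof.
move=> c v w; rewrite /poisson scaler_sumr -big_split; apply: eq_bigr => a _.
rewrite scaler_sumr -big_split; apply: eq_bigr => b _.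
by rewrite mderivD mderivZ mulrDr scalerDr -scalerAr !scalerA mulrC.
Qed.

HB.instance Definition _ u := GRing.isLinear.Build R[i] M M *:%R (poisson u)
  (poisson_is_linear u).

Lemma poisson_antisym u v : poisson v u = - poisson u v.
Proof.
rewrite /poisson exchange_big -sumrN; apply: eq_bigr => a _.
by rewrite -sumrN; apply: eq_bigr => b _; rewrite Lam_anti scaleNr mulrC.
Qed.

Lemma poissonZl a u v : poisson (a *: u) v = a *: poisson u v.
Proof. by rewrite poisson_antisym linearZ /= -scalerN -poisson_antisym. Qed.

Lemma poissonMr u v w : poisson u (v * w) = poisson u v * w + v * poisson u w.
Proof.
rewrite /poisson mulr_suml mulr_sumr -big_split; apply: eq_bigr => a _.
rewrite mulr_suml mulr_sumr -big_split; apply: eq_bigr => b _.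
by rewrite mderivM -!mul_mpolyC /=; ring.
Qed.

Lemma poissonC u c : poisson u c%:MP = 0.
Proof.
by rewrite /poisson big1 // => a _; rewrite big1 // => b _; rewrite mderivC mulr0 scaler0.
Qed.

Lemma mderivX1 (a i : 'I_(n + n)) : mderiv a ('X_i : M) = (i == a)%:R.
Proof.
rewrite mderivX mnm1E; case: eqP => [->|_]; last by rewrite scale0r.
suff -> : (U_(a) - U_(a) = 0)%MM by rewrite mpolyX0 scale1r.
by apply/mnmP => j; rewrite mnmBE subnn mnm0E.
Qed.

Lemma poissonX (i j : 'I_(n + n)) : poisson 'X_i 'X_j = (Lam i j)%:MP.
Proof.
rewrite /poisson (bigD1 i) //= [X in _ + X]big1 => [|a hai]; last first.
  by rewrite big1 // => b _; rewrite mderivX1 eq_sym (negbTE hai) mul0r scaler0.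
rewrite addr0 (bigD1 j) //= [X in _ + X]big1 => [|b hbj]; last first.
  by rewrite [mderiv b _]mderivX1 eq_sym (negbTE hbj) mulr0 scaler0.
by rewrite !mderivX1 !eqxx mulr1 addr0 -mul_mpolyC mulr1.
Qed.

End PoissonBracket.

Section QDegree.
Variables (R : realType) (n : nat).
Local Notation M := (Mpoly R n).

Definition qindex (i : 'I_(n + n)) := (n <= i)%N.

Definition qfree (u : M) := forall i, qindex i -> mderiv i u = 0.
Definition qaffine (u : M) := forall i, qindex i -> qfree (mderiv i u).

Lemma qfree_mderiv j u : qfree u -> qfree (mderiv j u).
Proof. by move=> hu i hi; rewrite mderiv_comm hu ?mderiv0. Qed.

Lemma qaffine_mderiv j u : qaffine u -> qaffine (mderiv j u).
Proof. by move=> hu i hi; rewrite mderiv_comm; apply/qfree_mderiv/hu. Qed.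

Lemma qfree_qaffine u : qfree u -> qaffine u.
Proof. by move=> hu i hi j hj; rewrite hu ?mderiv0. Qed.

Lemma qfreeC c : qfree c%:MP.
Proof. by move=> i _; rewrite mderivC. Qed.

Lemma qfreeZ a u : qfree u -> qfree (a *: u).
Proof. by move=> hu i hi; rewrite mderivZ hu ?scaler0. Qed.

Lemma qfreeM u v : qfree u -> qfree v -> qfree (u * v).
Proof. by move=> hu hv i hi; rewrite mderivM hu ?hv ?mulr0 ?mul0r ?addr0. Qed.

Lemma qaffineM u v : qaffine u -> qfree v -> qaffine (u * v).
Proof.
move=> hu hv i hi; rewrite mderivM [mderiv i v]hv // mulr0 addr0.
by apply: qfreeM => //; apply: hu.
Qed.

Lemma qfree_sum I r (P : pred I) (F : I -> M) :
  (forall x, P x -> qfree (F x)) -> qfree (\sum_(x <- r | P x) F x).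
Proof. by move=> hF i hi; rewrite raddf_sum big1 //= => x /hF ->. Qed.

Lemma qaffine_sum I r (P : pred I) (F : I -> M) :
  (forall x, P x -> qaffine (F x)) -> qaffine (\sum_(x <- r | P x) F x).
Proof.
by move=> hF i hi; rewrite raddf_sum /=; apply: qfree_sum => x /hF; apply.
Qed.

Lemma qaffineN u : qaffine u -> qaffine (- u).
Proof. by move=> hu i hi j hj; rewrite !mderivN hu ?oppr0. Qed.

Lemma poisson_qfree u v : qfree u -> qfree v -> poisson u v = 0.
Proof.
move=> hu hv; rewrite /poisson big1 // => a _; rewrite big1 // => b _.
have [qa|pa] := boolP (qindex a); first by rewrite hu // mul0r scaler0.
have [qb|pb] := boolP (qindex b); first by rewrite hv // mulr0 scaler0.
by rewrite Lam_eq0 ?scale0r // -[LHS]/(qindex a) -[RHS]/(qindex b) (negbTE pa) (negbTE pb).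
Qed.

Lemma qindex_Lam a b : Lam R a b != 0 -> qindex a = ~~ qindex b.
Proof.
move=> h; apply: contraTeq h; rewrite negbK => h; apply/eqP/Lam_eq0.
by move: h; rewrite /qindex; case: (n <= a)%N; case: (n <= b)%N.
Qed.

Lemma dern_qaffine s u : qaffine u -> qaffine (dern s u).
Proof. by elim: s => [//|x s ih] hu; apply/qaffine_mderiv/ih. Qed.

Lemma dern_qfree s u : qaffine u -> (0 < count qindex s)%N -> qfree (dern s u).
Proof.
elim: s => [//|x s ih] hu /=; have [qx|_] := boolP (qindex x) => /= hs.
  have [hs'|] := posnP (count qindex s); last by move=> /(ih hu)/qfree_mderiv.
  exact: (dern_qaffine s hu).
exact/qfree_mderiv/ih.
Qed.

Lemma dern_eq0 s u : qaffine u -> (1 < count qindex s)%N -> dern s u = 0.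
Proof.
elim: s => [//|x s ih] hu /=; have [qx|_] := boolP (qindex x) => /= hs.
  by rewrite (dern_qfree hu).
by rewrite ih ?mderiv0.
Qed.

Lemma Pl_eq0 l u v : qaffine u -> qaffine v -> (2 < l)%N -> Pl l u v = 0.
Proof.
move=> hu hv hl; rewrite /Pl big1 // => f _.
have [/forallP Lam_f|] := boolP [forall s, Lam R (f s).1 (f s).2 != 0]; last first.
  rewrite negb_forall => /existsP[s]; rewrite negbK => /eqP Lam_s.
  by rewrite (bigD1 s) //= Lam_s mul0r scale0r.
set s1 := [seq (f s).1 | s <- enum 'I_l]; set s2 := [seq (f s).2 | s <- enum 'I_l].
have count_s12 : (count qindex s1 + count qindex s2 = l)%N.
  rewrite !count_map
    -[X in (_ + X)%N](eq_count (a1 := predC (preim (fun s => (f s).1) qindex))).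
    by rewrite count_predC -enumT size_enum_ord.
  by move=> s /=; rewrite (qindex_Lam (Lam_f s)) negbK.
have [h1|h1] := ltnP 1 (count qindex s1); first by rewrite (dern_eq0 hu h1) mul0r scaler0.
by rewrite (@dern_eq0 s2 v) ?mulr0 ?scaler0 //; lia.
Qed.

Lemma Pl1 (u v : M) : Pl 1 u v = poisson u v.
Proof.
rewrite /Pl /poisson pair_big /=.
rewrite (reindex (fun ab : 'I_(n + n) * 'I_(n + n) => [ffun=> ab])) /=.
  by apply: eq_bigr => ab _; rewrite big_ord1 enum_ordSl enum_ord0 /= !ffunE.
exists (fun f => f ord0) => [ab _|f _]; first by rewrite ffunE.
by apply/ffunP => i; rewrite ffunE (ord1 i).
Qed.

Lemma star_br_poisson u v : qaffine u -> qaffine v -> star_br u v = poisson u v.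
Proof.
move=> hu hv; rewrite /star_br big_ord_recl big1 => [|l _]; last first.
  by rewrite Pl_eq0 ?scaler0 // lift0; lia.
by rewrite /= muln0 add0n Pl1 expr0 mul1r (_ : 1`! = 1)%N // invr1 scale1r addr0.
Qed.

End QDegree.

Section Generators.
Variables (R : realType) (n : nat).
Local Notation M := (Mpoly R n).
Local Notation pvar := (pvar R).
Local Notation qvar := (qvar R).

Lemma qfree_pvar (k : 'I_n) : qfree (pvar k).
Proof.
move=> i hi; rewrite mderivX1 (_ : lshift n k == i = false) //.
by apply/negbTE; apply: contraTneq hi => <-; rewrite /qindex -ltnNge /= ltn_ord.
Qed.

Lemma qaffine_qvar (k : 'I_n) : qaffine (qvar k).
Proof. by move=> i _; rewrite mderivX1 -mpolyC_nat; apply: qfreeC. Qed.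

Lemma poisson_pp (k j : 'I_n) : poisson (pvar k) (pvar j) = 0.
Proof. exact/poisson_qfree/qfree_pvar/qfree_pvar. Qed.

Lemma poisson_pq (k j : 'I_n) : poisson (pvar k) (qvar j) = (k == j)%:R.
Proof. by rewrite poissonX Lam_pq mpolyC_nat. Qed.

Lemma poisson_qq (k j : 'I_n) : poisson (qvar k) (qvar j) = 0.
Proof. by rewrite poissonX Lam_eq0 ?mpolyC0 //= !leq_addr. Qed.

Let S : M := \sum_(k < n) pvar k * qvar k.

Lemma poisson_pvar_S k : poisson (pvar k) S = pvar k.
Proof.
rewrite raddf_sum (bigD1 k) //= big1 => [|j /negbTE hkj].
  by rewrite poissonMr poisson_pq poisson_pp eqxx mul0r add0r mulr1 addr0.
by rewrite poissonMr poisson_pq poisson_pp eq_sym hkj mul0r mulr0 addr0.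
Qed.

Lemma poisson_qvar_S k : poisson (qvar k) S = - qvar k.
Proof.
rewrite raddf_sum (bigD1 k) //= big1 => [|j /negbTE hkj].
  by rewrite poissonMr poisson_qq poisson_antisym poisson_pq eqxx mulN1r mulr0 addr0 addr0.
by rewrite poissonMr poisson_qq poisson_antisym poisson_pq hkj oppr0 mul0r mulr0 addr0.
Qed.

Lemma poisson_S_S : poisson S S = 0.
Proof.
rewrite {2}/S raddf_sum big1 // => k _.
rewrite /= poissonMr poisson_antisym poisson_pvar_S poisson_antisym poisson_qvar_S.
by rewrite opprK mulNr addNr.
Qed.

Definition pgen (r : 'I_n.+1) : M := if unlift ord0 r is Some k then pvar k else 1.
Definition qgen (c : 'I_n.+1) : M := if unlift ord0 c is Some k then qvar k else - S.

Lemma pgen0 : pgen ord0 = 1.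
Proof. by rewrite /pgen unlift_none. Qed.

Lemma pgen_lift k : pgen (lift ord0 k) = pvar k.
Proof. by rewrite /pgen liftK. Qed.

Lemma qfree_pgen r : qfree (pgen r).
Proof.
by rewrite /pgen; case: unlift => [k|]; [exact: qfree_pvar | rewrite -mpolyC1; exact: qfreeC].
Qed.

Lemma qaffine_qgen c : qaffine (qgen c).
Proof.
rewrite /qgen; case: unlift => [k|]; first exact: qaffine_qvar.
by apply/qaffineN/qaffine_sum => k _; rewrite mulrC; apply/qaffineM/qfree_pvar/qaffine_qvar.
Qed.

Lemma poisson_pgen_qgen r c :
  poisson (pgen r) (qgen c) = (r == c)%:R - (c == ord0)%:R * pgen r.
Proof.
rewrite /pgen /qgen; case: (unliftP ord0 r) => [k ->|->]; last first.
  rewrite poisson_antisym -mpolyC1 poissonC oppr0 mulr1; case: (unliftP ord0 c) => [j ->|->].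
    by rewrite eq_sym lift0_eq0 subrr.
  by rewrite eqxx subrr.
case: (unliftP ord0 c) => [j ->|->].
  by rewrite poisson_pq (inj_eq lift_inj) lift0_eq0 mul0r subr0.
by rewrite raddfN /= poisson_pvar_S mul1r sub0r.
Qed.

Lemma poisson_qgen_qgen c d :
  poisson (qgen c) (qgen d) = (d == ord0)%:R * qgen c - (c == ord0)%:R * qgen d.
Proof.
rewrite /qgen; case: (unliftP ord0 c) => [j ->|->]; case: (unliftP ord0 d) => [k ->|->];
  rewrite ?eqxx ?lift0_eq0 ?mul0r ?mul1r ?subr0 ?sub0r ?raddfN /=.
- by rewrite poisson_qq.
- by rewrite poisson_qvar_S opprK.
- by rewrite poisson_antisym raddfN /= poisson_qvar_S !opprK.
- by rewrite poisson_antisym (raddfN (poisson S)) /= poisson_S_S !oppr0 subrr.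
Qed.
End Generators.

Section MomentMap.
Variables (R : realType) (n : nat).
Implicit Types X Y : 'M[R[i]]_n.+1.
Local Notation M := (Mpoly R n).
Local Notation pgen := (pgen R).
Local Notation qgen := (qgen R).

Definition pcol : 'cV[M]_(n.+1) := \col_r pgen r.
Definition qrow : 'rV[M]_(n.+1) := \row_c qgen c.
Definition mpolyC_mx (X : 'M[R[i]]_(n.+1)) : 'M[M]_(n.+1) := map_mx (fun z => z%:MP) X.
Definition varphi1 X : M := (mpolyC_mx X *m pcol) ord0 0.

Lemma mpolyC_mxB X Y : mpolyC_mx (X - Y) = mpolyC_mx X - mpolyC_mx Y.
Proof. by apply/matrixP => i j; rewrite !mxE mpolyCB. Qed.

Lemma mpolyC_mx_pcolE X i : (mpolyC_mx X *m pcol) i 0 = \sum_j X i j *: pgen j.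
Proof. by rewrite mxE; apply: eq_bigr => j _; rewrite !mxE mul_mpolyC. Qed.

Lemma qfree_mpolyC_mx_pcol X i : qfree ((mpolyC_mx X *m pcol) i 0).
Proof. by rewrite mpolyC_mx_pcolE; apply: qfree_sum => j _; apply/qfreeZ/qfree_pgen. Qed.

Lemma varphi1E X : varphi1 X = \sum_j X ord0 j *: pgen j.
Proof. exact: mpolyC_mx_pcolE. Qed.

Lemma qfree_varphi1 X : qfree (varphi1 X).
Proof. exact: qfree_mpolyC_mx_pcol. Qed.

Lemma varphi1_is_linear : linear varphi1.
Proof.
move=> a X Y; rewrite !varphi1E scaler_sumr -big_split; apply: eq_bigr => j _.
by rewrite !mxE scalerDl scalerA.
Qed.

HB.instance Definition _ := GRing.isLinear.Build R[i] 'M[R[i]]_n.+1 M *:%R varphi1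
  varphi1_is_linear.

Lemma varphi1_delta r c : varphi1 (delta_mx r c) = (r == ord0)%:R *: pgen c.
Proof.
rewrite varphi1E (bigD1 c) //= big1 => [|j /negbTE hjc]; last by rewrite mxE hjc andbF scale0r.
by rewrite mxE eqxx andbT eq_sym addr0.
Qed.

Lemma mpolyC_mxM X Y : mpolyC_mx (X *m Y) = mpolyC_mx X *m mpolyC_mx Y.
Proof. exact: map_mxM. Qed.

Lemma tilde_row_col X : tilde X = (qrow *m mpolyC_mx X *m pcol) 0 0.
Proof.
rewrite /tilde.
have -> : Psi R n = pcol *m qrow by apply/matrixP => r c; rewrite !mxE big_ord1 !mxE.
by rewrite -mulmxA mxtrace_mulC /mxtrace big_ord1.
Qed.

Lemma qaffine_tilde X : qaffine (tilde X).
Proof.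
rewrite tilde_row_col -mulmxA mxE; apply: qaffine_sum => c _; rewrite mxE.
by apply: qaffineM; [exact: qaffine_qgen | exact: qfree_mpolyC_mx_pcol].
Qed.

Lemma map_poisson_mpolyC_mx u X : map_mx (poisson u) (mpolyC_mx X) = 0.
Proof. by apply/matrixP => i j; rewrite !mxE poissonC. Qed.

Lemma poisson_tilde_expand u X : poisson u (tilde X) =
  (map_mx (poisson u) qrow *m mpolyC_mx X *m pcol
   + qrow *m mpolyC_mx X *m map_mx (poisson u) pcol) 0 0.
Proof.
by rewrite tilde_row_col (deriv_sandwich (poissonMr u)) ?map_poisson_mpolyC_mx.
Qed.

Lemma map_poisson_pgen_pcol s : map_mx (poisson (pgen s)) pcol = 0.
Proof. by apply/matrixP => r j; rewrite !mxE; apply/poisson_qfree/qfree_pgen/qfree_pgen. Qed.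

Lemma map_poisson_pgen_qrow s :
  map_mx (poisson (pgen s)) qrow = delta_mx 0 s - pgen s *: delta_mx 0 ord0.
Proof.
apply/matrixP => i c; rewrite (ord1 i) !mxE poisson_pgen_qgen /= eq_sym.
by rewrite [_ * pgen s]mulrC.
Qed.

Lemma map_poisson_qgen_qrow d :
  map_mx (poisson (qgen d)) qrow = qgen d *: delta_mx 0 ord0 - (d == ord0)%:R *: qrow.
Proof.
apply/matrixP => i c; rewrite (ord1 i) !mxE poisson_qgen_qgen /= eq_sym.
by rewrite [_ * qgen d]mulrC.
Qed.

Lemma map_poisson_qgen_pcol d :
  map_mx (poisson (qgen d)) pcol = (d == ord0)%:R *: pcol - delta_mx d 0.
Proof.
apply/matrixP => r j; rewrite (ord1 j) !mxE poisson_antisym poisson_pgen_qgen.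
by rewrite opprB andbT.
Qed.

Lemma poisson_tilde_pgen X s :
  poisson (tilde X) (pgen s) = varphi1 X * pgen s - (mpolyC_mx X *m pcol) s 0.
Proof.
rewrite poisson_antisym poisson_tilde_expand map_poisson_pgen_qrow.
rewrite map_poisson_pgen_pcol [X in _ + X]mulmx0 addr0 -mulmxA.
by rewrite mulmxBl -scalemxAl -!rowE /varphi1 !mxE opprB mulrC.
Qed.

Lemma poisson_tilde_qgen X d :
  poisson (tilde X) (qgen d) = (qrow *m mpolyC_mx X) 0 d - varphi1 X * qgen d.
Proof.
rewrite poisson_antisym poisson_tilde_expand map_poisson_qgen_qrow.
rewrite map_poisson_qgen_pcol /varphi1; move: pcol qrow (mpolyC_mx X) => P Q A.
rewrite !mulmxBl -!scalemxAl [X in _ + X]mulmxBr -[X in _ + (X - _)]scalemxAr.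
rewrite -[X in _ + (_ - X)]colE addrA subrK -mulmxA -rowE !mxE.
by rewrite opprB mulrC.
Qed.

Lemma map_poisson_tilde_pcol X :
  map_mx (poisson (tilde X)) pcol = varphi1 X *: pcol - mpolyC_mx X *m pcol.
Proof. by apply/matrixP => s j; rewrite (ord1 j) !mxE poisson_tilde_pgen !mxE. Qed.

Lemma map_poisson_tilde_qrow X :
  map_mx (poisson (tilde X)) qrow = qrow *m mpolyC_mx X - varphi1 X *: qrow.
Proof. by apply/matrixP => i d; rewrite (ord1 i) !mxE poisson_tilde_qgen !mxE. Qed.

Lemma poisson_tilde X Y : poisson (tilde X) (tilde Y) = tilde (mx_br X Y).
Proof.
rewrite [tilde Y]tilde_row_col [tilde (mx_br X Y)]tilde_row_col.
rewrite (deriv_sandwich_commutator (poissonMr _) (map_poisson_mpolyC_mx _ _)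
  (map_poisson_tilde_pcol X) (map_poisson_tilde_qrow X)).
by rewrite /mx_br mpolyC_mxB !mpolyC_mxM.
Qed.

Lemma poisson_tilde_varphi1 X Y :
  poisson (tilde X) (varphi1 Y) = varphi1 X * varphi1 Y - varphi1 (Y *m X).
Proof.
rewrite [varphi1 Y]/varphi1 [varphi1 (Y *m X)]/varphi1 mpolyC_mxM.
exact: (deriv_mulmx_col (poissonMr _) (map_poisson_mpolyC_mx _ _) _
  (map_poisson_tilde_pcol X)).
Qed.

Lemma poisson_tilde_varphi1_mx_br X Y :
  poisson (tilde X) (varphi1 Y) + poisson (varphi1 X) (tilde Y) = varphi1 (mx_br X Y).
Proof.
rewrite [poisson (varphi1 X) _]poisson_antisym [X in X - _]poisson_tilde_varphi1.
rewrite [X in _ - X]poisson_tilde_varphi1 (raddfB varphi1 (X *m Y) (Y *m X) :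
  varphi1 (mx_br X Y) = varphi1 (X *m Y) - varphi1 (Y *m X)).
(* [generalize] matches syntactically; rewriting or [ring] would try to
   unify distinct varphi1 terms by unfolding them. *)
generalize (varphi1 X) (varphi1 Y) (varphi1 (X *m Y)) (varphi1 (Y *m X)) => x y u v.
ring.
Qed.

End MomentMap.

Section SlLinear.
Variables (R : realType) (n : nat) (phi : 'M[R[i]]_n.+1 -> Mpoly R n).
Implicit Types X Y : 'M[R[i]]_n.+1.
Hypothesis phi_lin : forall c X Y, \tr X = 0 -> \tr Y = 0 ->
  phi (c *: X + Y) = c *: phi X + phi Y.

Lemma phiD X Y : \tr X = 0 -> \tr Y = 0 -> phi (X + Y) = phi X + phi Y.
Proof. by move=> trX trY; rewrite -[X in X + _]scale1r phi_lin // scale1r. Qed.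

Lemma phi0 : phi 0 = 0.
Proof. by apply/(addrI (phi 0)); rewrite -phiD ?mxtrace0 // !addr0. Qed.

Lemma phiZ c X : \tr X = 0 -> phi (c *: X) = c *: phi X.
Proof. by move=> trX; rewrite -[c *: X]addr0 phi_lin ?mxtrace0 // phi0 addr0. Qed.

Lemma phiB X Y : \tr X = 0 -> \tr Y = 0 -> phi (X - Y) = phi X - phi Y.
Proof. by move=> trX trY; rewrite -scaleN1r addrC phi_lin // scaleN1r addrC. Qed.

Lemma phi_sum I r (P : pred I) (F : I -> 'M[R[i]]_n.+1) :
  (forall i, P i -> \tr (F i) = 0) ->
  phi (\sum_(i <- r | P i) F i) = \sum_(i <- r | P i) phi (F i).
Proof.
move=> trF; suff [] : \tr (\sum_(i <- r | P i) F i) = 0 /\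
    phi (\sum_(i <- r | P i) F i) = \sum_(i <- r | P i) phi (F i) by [].
apply: (big_ind2 (fun A y => \tr A = 0 /\ phi A = y)) => [|A y B z [trA <-] [trB <-]|i /trF].
- by rewrite mxtrace0 phi0.
- by rewrite mxtraceD trA trB addr0 phiD.
- by [].
Qed.

Hypothesis phi_H1 : phi (delta_mx ord0 ord0 - delta_mx (inord 1) (inord 1)) = 1.
Hypothesis phi_Hk : forall k : nat, (1 <= k < n)%N ->
  phi (delta_mx (inord k) (inord k) - delta_mx (inord k.+1) (inord k.+1)) = 0.
Hypothesis phi_E0 : forall k : 'I_n, phi (delta_mx ord0 (lift ord0 k)) = pvar R k.
Hypothesis phi_E : forall r c : 'I_n.+1, (0 < r)%N -> r != c -> phi (delta_mx r c) = 0.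

Lemma phi_diag_sub k : (0 < k <= n)%N ->
  phi (delta_mx (inord k) (inord k) - delta_mx ord0 ord0) = -1.
Proof.
elim: k => [//|[_ _|k IH /andP[_ hk]]].
  have -> : delta_mx (inord 1) (inord 1) - delta_mx ord0 ord0 =
      (-1) *: (delta_mx ord0 ord0 - delta_mx (inord 1) (inord 1)) :> 'M[R[i]]_n.+1.
    by rewrite scaleN1r opprB.
  by rewrite phiZ ?mxtrace_delta_sub // phi_H1 scaleN1r.
have -> : delta_mx (inord k.+2) (inord k.+2) - delta_mx ord0 ord0 =
    (delta_mx (inord k.+1) (inord k.+1) - delta_mx ord0 ord0)
    - (delta_mx (inord k.+1) (inord k.+1) - delta_mx (inord k.+2) (inord k.+2))
    :> 'M[R[i]]_n.+1.
  by rewrite opprB [RHS]addrC addrA subrK.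
by rewrite phiB ?mxtrace_delta_sub // IH ?phi_Hk ?subr0 //; apply/andP; split => //; lia.
Qed.

Lemma phi_traceless_delta r c : phi (traceless_delta r c) = varphi1 (traceless_delta r c).
Proof.
rewrite /traceless_delta; have [<-|hrc] := eqVneq r c; last first.
  rewrite scale0r !subr0 varphi1_delta.
  case: (unliftP ord0 r) hrc => [k ->|-> hc].
    by rewrite lift0_eq0 scale0r => hrc; rewrite phi_E.
  by case: (unliftP ord0 c) hc => [j ->|->]; rewrite ?eqxx // phi_E0 scale1r pgen_lift.
rewrite scale1r raddfB /= !varphi1_delta eqxx pgen0 scale1r.
case: (unliftP ord0 r) => [k ->|->]; last by rewrite subrr phi0 eqxx pgen0 scale1r subrr.
rewrite lift0_eq0 scale0r sub0r (_ : lift ord0 k = inord k.+1) ?phi_diag_sub //.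
  by rewrite ltn_ord.
by apply/val_inj; rewrite /= inordK // ltnS ltn_ord.
Qed.

Lemma phi_eq_varphi1 X : \tr X = 0 -> phi X = varphi1 X.
Proof.
move=> trX; have trD r c : \tr (X r c *: traceless_delta r c) = 0.
  by rewrite mxtraceZ mxtrace_traceless_delta mulr0.
rewrite (traceless_delta_expansion trX) phi_sum => [|r _]; last first.
  by rewrite raddf_sum big1 //= => c _; apply: trD.
rewrite raddf_sum; apply: eq_bigr => r _; rewrite phi_sum // raddf_sum.
apply: eq_bigr => c _; rewrite phiZ ?mxtrace_traceless_delta //.
by rewrite phi_traceless_delta /= linearZ.
Qed.

End SlLinear.

Section DegreeOneSeries.
Variables (R : realType) (n : nat).
Local Notation M := (Mpoly R n).

Definition deg1_ser (u0 u1 : M) : Mser R n :=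
  fun k => if k == 0%N then u0 else if k == 1%N then u1 else 0.

Lemma star_ser_deg1 (u0 u1 v0 v1 : M) k :
  qaffine u0 -> qaffine v0 -> qfree u1 -> qfree v1 ->
  star_ser (deg1_ser u0 u1) (deg1_ser v0 v1) k =
  deg1_ser (poisson u0 v0) (poisson u0 v1 + poisson u1 v0) k.
Proof.
move=> hu0 hv0 hu1 hv1.
have qaffine_deg1 w0 w1 m : qaffine w0 -> qfree w1 -> qaffine (deg1_ser w0 w1 m).
  move=> hw0 hw1; rewrite /deg1_ser.
  case: m => [|[|m]] /=; [exact: hw0 | exact: qfree_qaffine |].
  by rewrite -mpolyC0; apply/qfree_qaffine/qfreeC.
rewrite /star_ser (eq_bigr (fun m : 'I_k.+1 =>
  poisson (deg1_ser u0 u1 m) (deg1_ser v0 v1 (k - m)%N))) => [|m _]; last first.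
  by rewrite star_br_poisson; [| exact: qaffine_deg1 hu0 hu1 | exact: qaffine_deg1 hv0 hv1].
rewrite /deg1_ser; case: k => [|[|k]]; first by rewrite big_ord1.
  by rewrite big_ord_recl big_ord1.
rewrite big1 // => -[[|[|m]] hm] _ /=.
- exact: raddf0.
- rewrite subn1 /=; case: k {hm} => [|k] /=; [exact: poisson_qfree | exact: raddf0].
- by rewrite poisson_antisym raddf0 oppr0.
Qed.

End DegreeOneSeries.

Theorem proposition8p1 (R : realType) (n : nat) (hn : (1 <= n)%N)
  (phi1 : 'M[R[i]]_(n.+1) -> Mpoly R n)
  (* phi1 is linear on g = sl(n+1, C) *)
  (hlin : forall (c : R[i]) (X Y : 'M[R[i]]_(n.+1)),
      \tr X = 0 -> \tr Y = 0 -> phi1 (c *: X + Y) = c *: phi1 X + phi1 Y)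
  (* phi1(E_11 - E_22) = 1 *)
  (hH1 : phi1 (delta_mx ord0 ord0 - delta_mx (inord 1) (inord 1)) = 1)
  (* phi1(E_kk - E_{k+1,k+1}) = 0 for k = 2..n  (0-indexed rows k-1, k) *)
  (hHk : forall k : nat, (1 <= k < n)%N ->
      phi1 (delta_mx (inord k) (inord k) - delta_mx (inord k.+1) (inord k.+1)) = 0)
  (* phi1(E_{1,k+1}) = p_k for k = 1..n *)
  (hE1 : forall k : 'I_n, phi1 (delta_mx ord0 (lift ord0 k)) = pvar R k)
  (* phi1(E_ij) = 0 for i >= 2, j <> i *)
  (hEij : forall r c : 'I_(n.+1), (0 < r)%N -> r != c -> phi1 (delta_mx r c) = 0)
  : forall (a : R[i]) (X Y : 'M[R[i]]_(n.+1)), \tr X = 0 -> \tr Y = 0 ->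
      forall k : nat,
        Phi_a phi1 a (mx_br X Y) k = star_ser (Phi_a phi1 a X) (Phi_a phi1 a Y) k.
Proof.
(* The argument does not use [hn]. *)
move=> a X Y trX trY k.
have trXY : \tr (mx_br X Y) = 0 by rewrite /mx_br raddfB /= mxtrace_mulC subrr.
have Phi_deg1 Z : \tr Z = 0 -> Phi_a phi1 a Z = deg1_ser (tilde Z) (a *: varphi1 Z).
  by move=> trZ; rewrite /Phi_a (phi_eq_varphi1 hlin hH1 hHk hE1 hEij trZ).
rewrite (Phi_deg1 _ trXY) (Phi_deg1 _ trX) (Phi_deg1 _ trY).
rewrite star_ser_deg1; [| exact: qaffine_tilde | exact: qaffine_tilde
  | exact/qfreeZ/qfree_varphi1 | exact/qfreeZ/qfree_varphi1].
by rewrite poisson_tilde linearZ poissonZl -scalerDr poisson_tilde_varphi1_mx_br.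
Qed.
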